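(* Let $(X_B,X_C,X_R)$ be an OCC of a graph $G$, let $f_X$ be a proper $2$-coloring of $G[X_B]$, let $B^\ast \subseteq X_B$ satisfy property $(\star)$, and let $G'$ be the reduced graph. If $S'$ is a minimum-size odd cycle transversal of $G'$, then $S' \subseteq V(G) \cap V(G')$ and $S'$ is a minimum-size odd cycle transversal of $G$.
   Context: An odd cycle transversal (OCT) of a graph is a vertex set whose removal leaves a bipartite graph. An odd cycle cut (OCC) of $G$ is a partition $(X_B, X_C, X_R)$ of $V(G)$ such that $G[X_B]$ is bipartite, there is no edge between $X_B$ and $X_R$, and $X_B \cup X_C \neq \emptyset$. Auxiliary graph: $G_{\mathrm{aux}}$ is obtained from a copy of $G[X_B]$ by adding, for each $v \in X_C$, new vertices $v^{(0)}, v^{(1)}$ and, for each $u \in N_G(v) \cap X_B$, the edge $v^{(f_X(u))}u$; $T := \{v^{(i)} : v \in X_C, i \in \{0,1\}\}$. Property $(\star)$ of $B^\ast \subseteq X_B$: for every partition $(T_1,T_2,T_3,T_X)$ of $T$ into four possibly empty parts, if there exists $S \subseteq X_B$ with $|S| \le |T|$ separating $T_i$ and $T_j$ (no connected component of $G_{\mathrm{aux}} - T_X - S$ meets both) for all $1 \le i < j \le 3$, then $B^\ast$ contains such a set $S$ of minimum possible size. Reduced graph $G'$: start from $G - (X_B \setminus B^\ast)$; then, for every unordered pair $\{u,v\}$ of (not necessarily distinct) vertices of $X_C \cup B^\ast$ and every parity $p \in \{\text{even},\text{odd}\}$ such that $G$ contains a $(u,v)$-walk of length of parity $p$ that has at least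 one internal vertex and all of whose internal vertices lie in $X_B \setminus B^\ast$: if $p$ is even, add two new vertices $x, x'$, each adjacent to exactly $u$ and $v$; if $p$ is odd, add four new vertices $x,y,x',y'$ and the edges $ux, xy, yv, ux', x'y', y'v$. All added vertices are distinct and new. *)

From mathcomp Require Import all_boot.
From mathcomp Require Import boolp.
Set Implicit Arguments. Unset Strict Implicit. Unset Printing Implicit Defensive.

Section Generic.
Variable T : finType.

Definition bipartite_on (e : rel T) (A : {set T}) : Prop :=
  exists f : T -> bool, forall x y, x \in A -> y \in A -> e x y -> f x != f y.

Definition is_oct (e : rel T) (W S : {set T}) : Prop :=
  S \subset W /\ bipartite_on e (W :\: S).

Definition is_min_oct (e : rel T) (W S : {set T}) : Prop :=
  is_oct e W S /\ forall S2, is_oct e W S2 -> #|S| <= #|S2|.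

Definition conn_in (e : rel T) (A : {set T}) (x y : T) : bool :=
  connect (fun a b => [&& a \in A, b \in A & e a b]) x y.

Definition separated_in (e : rel T) (A P Q : {set T}) : Prop :=
  forall x y, x \in P -> y \in Q -> ~~ conn_in e A x y.
End Generic.

Section OCC.
Variables (V : finType) (e : rel V).

Definition simple_graph : Prop := symmetric e /\ irreflexive e.

Definition is_OCC (XB XC XR : {set V}) : Prop :=
  [/\ [&& [disjoint XB & XC], [disjoint XB & XR] & [disjoint XC & XR]],
      XB :|: XC :|: XR = [set: V],
      bipartite_on e XB,
      (forall x y, x \in XB -> y \in XR -> ~~ e x y) &
      XB :|: XC != set0].

Definition proper2col_on (XB : {set V}) (f : V -> bool) : Prop :=
  forall x y, x \in XB -> y \in XB -> e x y -> f x != f y.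

(* ---- auxiliary graph: copy of G[XB] (inl) plus v^(i) = inr (v, i) ---- *)
Definition auxV := (V + (V * bool))%type.

Definition aux_edge (XB XC : {set V}) (f : V -> bool) (a b : auxV) : bool :=
  match a, b with
  | inl x, inl y => [&& x \in XB, y \in XB & e x y]
  | inr (v, i), inl u => [&& v \in XC, u \in XB, e v u & i == f u]
  | inl u, inr (v, i) => [&& v \in XC, u \in XB, e v u & i == f u]
  | _, _ => false
  end.

Definition aux_T (XC : {set V}) : {set auxV} :=
  [set z : auxV | if z is inr (v, _) then v \in XC else false].

Definition aux_W (XB XC : {set V}) : {set auxV} :=
  (@inl V (V * bool)) @: XB :|: aux_T XC.

Definition separates3 (XB XC : {set V}) (f : V -> bool) (S : {set V})
    (T1 T2 T3 TX : {set auxV}) : Prop :=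
  let A := aux_W XB XC :\: (TX :|: (@inl V (V * bool)) @: S) in
  [/\ separated_in (aux_edge XB XC f) A T1 T2,
      separated_in (aux_edge XB XC f) A T1 T3 &
      separated_in (aux_edge XB XC f) A T2 T3].

Definition partition4 (T0 T1 T2 T3 TX : {set auxV}) : Prop :=
  [/\ [&& [disjoint T1 & T2], [disjoint T1 & T3] & [disjoint T1 & TX]],
      [&& [disjoint T2 & T3], [disjoint T2 & TX] & [disjoint T3 & TX]] &
      T1 :|: T2 :|: T3 :|: TX = T0].

Definition property_star (XB XC : {set V}) (f : V -> bool) (Bs : {set V}) : Prop :=
  forall T1 T2 T3 TX : {set auxV},
    partition4 (aux_T XC) T1 T2 T3 TX ->
    (exists S : {set V}, [/\ S \subset XB, #|S| <= #|aux_T XC| &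
                             separates3 XB XC f S T1 T2 T3 TX]) ->
    exists S : {set V}, [/\ S \subset Bs, separates3 XB XC f S T1 T2 T3 TX &
       forall S2 : {set V}, S2 \subset XB -> separates3 XB XC f S2 T1 T2 T3 TX ->
         #|S| <= #|S2|].

Definition walk_through (D : {set V}) (u v : V) (p : bool) : Prop :=
  exists s : seq V, [/\ s != [::], all (mem D) s, path e u (rcons s v) &
                        odd (size s).+1 = p].

(* New vertices are inr (u, v, p, i): the gadget for the unordered pair {u,v}
   (represented by the ordered pair with enum_rank u <= enum_rank v) and
   parity p.  Even gadget: i = 0 (x), 1 (x').  Odd gadget: i = 0 (x),
   1 (y), 2 (x'), 3 (y'). *)
Definition redV := (V + (V * V * bool * 'I_4))%type.

Definition red_W (XB XC Bs : {set V}) : {set redV} :=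
  [set z : redV | match z with
    | inl x => x \notin XB :\: Bs
    | inr (u, v, p, i) =>
        [&& u \in XC :|: Bs, v \in XC :|: Bs,
            (enum_rank u <= enum_rank v)%N,
            `[< walk_through (XB :\: Bs) u v p >] &
            p || (i < 2)%N]
    end].

Definition red_base (a b : redV) : bool :=
  match a, b with
  | inl x, inl y => e x y
  | inr (u, v, p, i), inl w =>
      if ~~ p then (w == u) || (w == v)
      else (((i == 0 :> nat) || (i == 2 :> nat)) && (w == u))
        || (((i == 1 :> nat) || (i == 3 :> nat)) && (w == v))
  | inr (u, v, p, i), inr (u', v', p', j) =>
      [&& p, (u, v, p) == (u', v', p') &
          ((i == 0 :> nat) && (j == 1 :> nat)) ||
          ((i == 2 :> nat) && (j == 3 :> nat))]
  | _, _ => false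
  end.

Definition red_edge (XB XC Bs : {set V}) (a b : redV) : bool :=
  [&& a \in red_W XB XC Bs, b \in red_W XB XC Bs & red_base a b || red_base b a].
End OCC.

From mathcomp Require Import all_boot boolp zify.
Set Implicit Arguments. Unset Strict Implicit. Unset Printing Implicit Defensive.

(* A solution of G avoiding XB \ B* is also a solution of G': walks through
   XB \ B* between surviving vertices have the parity dictated by any
   2-colouring, so every gadget can be coloured alternately.
   Every solution S of G can be traded for one avoiding XB \ B* that is no
   larger: if |S ∩ XB| > |XC|, replace S ∩ XB by XC; otherwise S ∩ XB separates,
   in G_aux, the terminals agreeing with a 2-colouring of G - S from those
   disagreeing with it, property (⋆) yields a separator inside B* that is no
   larger, and flipping fX on the components it cuts off repairs the colouring.
   Conversely, the original vertices of a solution S' of G' together with one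
   endpoint of every gadget that S' hits in both copies form a solution of G.
   Such a gadget costs S' two vertices but the repair only one, so a minimum S'
   contains no gadget vertex at all. *)

Lemma card_sum_set (T1 T2 : finType) (A : {set T1 + T2}) :
  #|A| = #|[set x | inl x \in A]| + #|[set y | inr y \in A]|.
Proof.
set P := [set x | _]; set R := [set y | _].
have inl_inr (x : T1) : inl x \in inr @: R = false by apply/imsetP => -[].
have inr_inl (y : T2) : inr y \in inl @: P = false by apply/imsetP => -[].
have -> : A = inl @: P :|: inr @: R.
  apply/setP => -[x|y]; rewrite in_setU ?inl_inr ?inr_inl ?orbF //=.
    by rewrite mem_imset ?inE //; exact: inl_inj.
  by rewrite mem_imset ?inE //; exact: inr_inj.
rewrite cardsU; have -> : inl @: P :&: inr @: R = set0.
  by apply/setP => -[x|y]; rewrite !inE ?inl_inr ?inr_inl ?andbF.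
by rewrite cards0 subn0 (card_imset _ inl_inj) (card_imset _ inr_inj).
Qed.

Lemma mem_inl_imset (T1 T2 : finType) (A : {set T1}) x :
  (inl x \in (@inl T1 T2) @: A) = (x \in A).
Proof. exact: mem_imset inl_inj. Qed.

Lemma inr_in_inl_imset (T1 T2 : finType) (A : {set T1}) y :
  (inr y \in (@inl T1 T2) @: A) = false.
Proof. by apply/imsetP => -[]. Qed.

Section Colourings.
Variables (V : finType) (e : rel V).

Lemma proper2col_onS (A B : {set V}) (f : V -> bool) :
  A \subset B -> proper2col_on e B f -> proper2col_on e A f.
Proof. by move=> /subsetP AB fB x y /AB Hx /AB Hy; exact: fB. Qed.

Lemma is_oct_setTP (S : {set V}) :
  is_oct e [set: V] S <-> exists h, proper2col_on e (~: S) h.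
Proof. by rewrite /is_oct /bipartite_on setTD; split=> [[]|] // ?; split. Qed.

Lemma path_parity (A : {set V}) (h : V -> bool) s u v :
  proper2col_on e A h -> u \in A -> v \in A -> all (mem A) s ->
  path e u (rcons s v) -> odd (size s).+1 = h u (+) h v.
Proof.
move=> hA; elim: s u => [|a s IH] u Hu Hv /=.
  by rewrite andbT => _ /(hA _ _ Hu Hv); case: (h u); case: (h v).
case/andP => Ha Hs /andP [Hua Hp]; have /= -> := IH _ Ha Hv Hs Hp.
by move: (hA _ _ Hu Ha Hua); case: (h u); case: (h a); case: (h v).
Qed.

Lemma walk_through_parity (A D : {set V}) (h : V -> bool) u v p :
  proper2col_on e A h -> D \subset A -> u \in A -> v \in A ->
  walk_through e D u v p -> p = h u (+) h v.
Proof.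
move=> hA /subsetP DA Hu Hv [s [_ Hs Hp <-]]; apply: path_parity hA Hu Hv _ Hp.
by apply/allP => x /(allP Hs) /DA.
Qed.

Hypothesis e_sym : symmetric e.

Lemma rev_path_rcons s u v : path e u (rcons s v) -> path e v (rcons (rev s) u).
Proof.
move=> H; have := rev_path e u (rcons s v).
rewrite last_rcons belast_rcons rev_cons => ->.
by rewrite (eq_path (e' := e)) // => x y /=; rewrite e_sym.
Qed.

Lemma walk_through_sym D u v p : walk_through e D u v p -> walk_through e D v u p.
Proof.
case=> s [s0 Hs Hp Ho]; exists (rev s); split.
- by rewrite -size_eq0 size_rev size_eq0.
- by rewrite all_rev.
- exact: rev_path_rcons.
- by rewrite size_rev.
Qed.

End Colourings.

(** * Colouring the reduced graph *)

Section ReducedGraph.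
Variables (V : finType) (e : rel V) (XB XC Bs : {set V}).

(* Gadget paths are coloured alternately from the [u] end, or from the [v] end
   when [u] is deleted; the parity of the underlying walk makes both ends agree. *)
Definition red_col (S : {set V}) (h : V -> bool) (z : redV V) : bool :=
  match z with
  | inl x => h x
  | inr (u, v, p, i) =>
     if p then
       let b := if u \in S then h v else ~~ h u in
       if (i == 0 :> nat) || (i == 2 :> nat) then b else ~~ b
     else if u \in S then ~~ h v else ~~ h u
  end.

Lemma red_col_base (S : {set V}) (h : V -> bool) a b :
  [disjoint S & XB :\: Bs] -> proper2col_on e (~: S) h ->
  a \in red_W e XB XC Bs :\: inl @: S -> b \in red_W e XB XC Bs :\: inl @: S ->
  red_base e a b -> red_col S h a != red_col S h b.
Proof.
move=> SD hS.
have walk_parity u v p : walk_through e (XB :\: Bs) u v p ->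
    u \notin S -> v \notin S -> p = h u (+) h v.
  move=> Hw Hu Hv; apply: walk_through_parity hS _ _ _ Hw; rewrite ?inE //.
  by rewrite -disjoints_subset disjoint_sym.
case: a b => [x|[[[u v] p] i]] [y|[[[u' v'] p'] j]];
  rewrite !inE ?mem_inl_imset ?inr_in_inl_imset //=.
- by case/andP => Hx _ /andP [Hy _]; apply: hS; rewrite inE.
- case/and5P => _ _ _ /asboolP /walk_parity Hpar _ /andP [Hy _].
  case: p Hpar => Hpar /=.
  + case/orP => /andP [Hi /eqP Hyu]; subst y.
    * by rewrite Hi (negbTE Hy); case: (h u).
    * have -> : ((i == 0 :> nat) || (i == 2 :> nat)) = false.
        by move: i Hi => [[|[|[|[|?]]]] ?].
      case: (boolP (u \in S)) => Hu /=; first by case: (h v).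
      by move: (Hpar Hu Hy); case: (h u); case: (h v).
  + case/orP => /eqP Hyu; subst y.
    * by rewrite (negbTE Hy); case: (h u).
    * case: (boolP (u \in S)) => Hu /=; first by case: (h v).
      by move: (Hpar Hu Hy); case: (h u); case: (h v).
- move=> _ _ /and3P [Hp /eqP [<- <- <-] Hij]; rewrite Hp.
  by case/orP: Hij => /andP [/eqP -> /eqP ->] /=; case: (if _ then _ else _).
Qed.

Lemma red_oct_of_oct (S : {set V}) (h : V -> bool) :
  [disjoint S & XB :\: Bs] -> proper2col_on e (~: S) h ->
  is_oct (red_edge e XB XC Bs) (red_W e XB XC Bs) (inl @: S).
Proof.
move=> SD hS; split.
  by apply/subsetP => _ /imsetP [x Hx ->]; rewrite inE (disjointFr SD Hx).
exists (red_col S h) => a b Ha Hb /and3P [_ _ /orP [Hab|Hba]].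
  exact: red_col_base.
by rewrite eq_sym; apply: red_col_base.
Qed.

End ReducedGraph.

Section OddCycleCut.
Variables (V : finType) (e : rel V) (XB XC XR Bs : {set V}) (fX : V -> bool).
Hypothesis e_sym : symmetric e.
Hypothesis occ : is_OCC e XB XC XR.
Hypothesis fX_col : proper2col_on e XB fX.

Lemma XB_notin_XC x : x \in XB -> x \notin XC.
Proof. by case: occ => /and3P [BC _ _] _ _ _ _ /(disjointFr BC) ->. Qed.

Lemma XC_notin_XB x : x \in XC -> x \notin XB.
Proof. exact: contraL (@XB_notin_XC x). Qed.

Lemma XB_edge_XC x y : x \in XB -> y \notin XB -> e x y -> y \in XC.
Proof.
case: occ => _ cover _ noBR _ Hx Hy Hxy.
have : y \in [set: V] by []; rewrite -cover !inE (negbTE Hy) /= => /orP [//|Hr].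
by move: (noBR _ _ Hx Hr); rewrite Hxy.
Qed.

Lemma disjoint_setDU (S Y : {set V}) :
  [disjoint Y & XB :\: Bs] -> [disjoint (S :\: XB) :|: Y & XB :\: Bs].
Proof.
rewrite !disjoints_subset subUset => ->; rewrite andbT.
by apply/subsetP => x; rewrite !inE => /andP [/negbTE -> _]; rewrite andbF.
Qed.

Lemma notin_XB_setD u : u \in XC :|: Bs -> u \notin XB :\: Bs.
Proof. by rewrite !inE => /orP [/XC_notin_XB/negbTE ->|->]; rewrite ?andbF. Qed.

(** * Solutions avoiding XB \ B* *)

Lemma proper2col_glue (N : {set V}) (hB g : V -> bool) :
  proper2col_on e (XB :\: N) hB -> proper2col_on e (~: (N :|: XB)) g ->
  (forall x y, x \in XB :\: N -> y \in XC :\: N -> e x y -> hB x != g y) ->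
  proper2col_on e (~: N) (fun x => if x \in XB then hB x else g x).
Proof.
move=> hBP gP cross.
have cross' x y : x \in XB -> x \notin N -> y \notin XB -> y \notin N -> e x y -> hB x != g y.
  move=> HxB HxN HyB HyN Hxy; apply: (cross _ _ _ _ Hxy).
    by rewrite inE HxB HxN.
  by rewrite inE HyN (XB_edge_XC HxB HyB Hxy).
move=> x y; rewrite !inE => HxN HyN Hxy.
case: (boolP (x \in XB)) => HxB; case: (boolP (y \in XB)) => HyB.
- by apply: hBP => //; rewrite inE ?HxN ?HyN.
- exact: cross'.
- by rewrite eq_sym; apply: cross' => //; rewrite e_sym.
- by apply: gP => //; rewrite !inE negb_or ?HxN ?HyN.
Qed.

Lemma oct_replace_by_XC (S : {set V}) (g : V -> bool) :
  proper2col_on e (~: S) g ->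
  proper2col_on e (~: ((S :\: XB) :|: XC)) (fun x => if x \in XB then fX x else g x).
Proof.
move=> gS; apply: proper2col_glue.
- by apply: proper2col_onS fX_col; exact: subsetDl.
- apply: proper2col_onS gS; apply/subsetP => x; rewrite !inE.
  by case: (x \in S); case: (x \in XB); rewrite ?orbT.
- by move=> x y _ /setDP [HyC]; rewrite inE HyC orbT.
Qed.

Definition aux_deleted (S : {set V}) : {set auxV V} :=
  [set z | if z is inr (v, _) then (v \in XC) && (v \in S) else false].

Definition aux_agree (S : {set V}) (g : V -> bool) : {set auxV V} :=
  [set z | if z is inr (v, i) then [&& v \in XC, v \notin S & g v == i] else false].

Definition aux_disagree (S : {set V}) (g : V -> bool) : {set auxV V} :=
  [set z | if z is inr (v, i) then [&& v \in XC, v \notin S & g v != i] else false].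

Lemma partition4_aux (S : {set V}) (g : V -> bool) :
  partition4 (aux_T XC) (aux_agree S g) (aux_disagree S g) set0 (aux_deleted S).
Proof.
split; try (apply/and3P; split); rewrite ?disjoints_subset;
  try (apply/subsetP => -[x|[v i]]); try (apply/setP => -[x|[v i]]); rewrite !inE //;
  by case: (v \in XC); case: (v \in S); case: (g v == i).
Qed.

Lemma aux_edge_sym : symmetric (aux_edge e XB XC fX).
Proof. by move=> [x|[v i]] [y|[w j]] //=; rewrite e_sym andbCA. Qed.

(* Within G_aux - TX - (S :&: XB) the parity [aux_parity g] is constant on
   components; it is true on [aux_agree S g] and false on [aux_disagree S g]. *)
Definition aux_parity (g : V -> bool) (z : auxV V) : bool :=
  match z with inl u => g u (+) fX u | inr (v, i) => ~~ (g v (+) i) end.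

Lemma separated_aux_of_col (S : {set V}) (g : V -> bool) :
  proper2col_on e (~: S) g ->
  separated_in (aux_edge e XB XC fX)
    (aux_W XB XC :\: (aux_deleted S :|: inl @: (S :&: XB)))
    (aux_agree S g) (aux_disagree S g).
Proof.
move=> gS x y Hx Hy; apply/negP => Hc.
set A := _ :\: _ in Hc.
have gS' a b : a \notin S -> b \notin S -> e a b -> g a != g b.
  by move=> Ha Hb; apply: gS; rewrite inE.
have Hcl : closed (fun a b => [&& a \in A, b \in A & aux_edge e XB XC fX a b])
    [pred z | aux_parity g z].
  move=> [a|[v i]] [b|[w j]];
    rewrite !inE ?mem_inl_imset ?inr_in_inl_imset ?orbF /= ?andbF //= ?inE.
  - case/and3P => /andP [Ha _] /andP [Hb _] /and3P [HaB HbB Hab].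
    move: Ha Hb; rewrite HaB HbB !andbT => Ha Hb.
    move: (gS' _ _ Ha Hb Hab) (fX_col HaB HbB Hab).
    by case: (g a); case: (g b); case: (fX a); case: (fX b).
  - case/and3P => /andP [Ha _] /andP [Hw _] /and4P [HwC HaB Hwa /eqP ->].
    move: Ha Hw; rewrite HaB HwC !andbT /= => Ha Hw.
    rewrite e_sym in Hwa; move: (gS' _ _ Ha Hw Hwa).
    by case: (g a); case: (g w); case: (fX a).
  - case/and3P => /andP [Hv _] /andP [Hb _] /and4P [HvC HbB Hvb /eqP ->].
    move: Hb Hv; rewrite HbB HvC !andbT /= => Hb Hv.
    move: (gS' _ _ Hv Hb Hvb).
    by case: (g b); case: (g v); case: (fX b).
have := closed_connect Hcl Hc; clear Hc Hcl; move: Hx Hy.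
case: x => [x|[v i]]; rewrite inE //; case: y => [y|[w j]]; rewrite inE //=.
case/and3P => _ _ /eqP <-; case/and3P => _ _ Hwj.
by rewrite !inE /= addbb /=; move: Hwj; case: (g w); case: j.
Qed.

(* Flipping [fX] on the components of G_aux - TX - Z that reach [aux_agree S g]
   makes it compatible with [g] across every surviving edge between XB and XC. *)
Lemma col_of_separator (S Z : {set V}) (g : V -> bool) :
  proper2col_on e (~: S) g ->
  separated_in (aux_edge e XB XC fX) (aux_W XB XC :\: (aux_deleted S :|: inl @: Z))
    (aux_agree S g) (aux_disagree S g) ->
  exists h, proper2col_on e (~: ((S :\: XB) :|: Z)) h.
Proof.
move=> gS sepZ.
set A := _ :\: _ in sepZ; set conn := conn_in (aux_edge e XB XC fX) A.
have connC a b : conn a b = conn b a.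
  by apply: sym_connect_sym => c d; rewrite aux_edge_sym andbCA.
have inAl x : x \in XB -> x \notin Z -> inl x \in A.
  by move=> Hx HxZ; rewrite !inE mem_inl_imset HxZ orbF /= mem_inl_imset Hx.
have inAr v i : v \in XC -> v \notin S -> inr (v, i) \in A.
  by move=> Hv HvS; rewrite !inE inr_in_inl_imset orbF /= Hv (negbTE HvS) orbT.
have notinZ x : x \notin (S :\: XB) :|: Z -> x \notin Z.
  by apply: contra => xZ; rewrite inE xZ orbT.
pose flip x := [exists t, (t \in aux_agree S g) && conn (inl x) t].
exists (fun x => if x \in XB then fX x (+) flip x else g x); apply: proper2col_glue.
- move=> x y /setDP [HxB /notinZ HxZ] /setDP [HyB /notinZ HyZ] Hxy.
  have -> : flip x = flip y.
    apply/existsP/existsP => -[t /andP [Ht Hc]]; exists t; rewrite Ht;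
      apply: connect_trans Hc; apply: connect1; rewrite !inAl //=.
    + by rewrite HxB HyB e_sym.
    + by rewrite HxB HyB.
  by move: (fX_col HxB HyB Hxy); case: (fX x); case: (fX y); case: (flip y).
- apply: proper2col_onS gS; apply/subsetP => x; rewrite !inE.
  by case: (x \in S); case: (x \in XB); rewrite ?orbT.
- move=> x y /setDP [HxB /notinZ HxZ] /setDP [HyC HyN] Hxy.
  have HyS : y \notin S.
    by apply: contra HyN => HyS; rewrite !inE HyS (XC_notin_XB HyC).
  have yx : conn (inl x) (inr (y, fX x)).
    by apply: connect1; rewrite inAl // inAr //= HyC HxB e_sym Hxy eqxx.
  case: (boolP (g y == fX x)) => gyx.
    have -> : flip x by apply/existsP; exists (inr (y, fX x)); rewrite yx !inE HyC HyS gyx.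
    by rewrite (eqP gyx); case: (fX x).
  have -> : flip x = false.
    apply/negbTE/existsP => -[t /andP [Ht Hct]].
    apply: (negP (sepZ _ (inr (y, fX x)) Ht _)); first by rewrite !inE HyC HyS gyx.
    by rewrite connC in Hct; exact: connect_trans Hct yx.
  by move: gyx; case: (g y); case: (fX x).
Qed.

Lemma card_XC_le_aux_T : #|XC| <= #|aux_T XC|.
Proof.
have inj : injective (fun v : V => @inr V (V * bool) (v, false)) by move=> ? ? [].
rewrite -(card_imset XC inj).
by apply: subset_leq_card; apply/subsetP => _ /imsetP [v Hv ->]; rewrite inE.
Qed.

Section Replacement.
Hypothesis star : property_star e XB XC fX Bs.

Lemma avoiding_oct_of_oct (S : {set V}) : is_oct e [set: V] S ->
  exists (S2 : {set V}) (h : V -> bool),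
    [/\ [disjoint S2 & XB :\: Bs], proper2col_on e (~: S2) h & #|S2| <= #|S|].
Proof.
case/is_oct_setTP => g gS; rewrite -(cardsID XB S) addnC.
case: (ltnP #|XC| #|S :&: XB|) => HC.
  exists ((S :\: XB) :|: XC), (fun x => if x \in XB then fX x else g x); split.
  - apply: disjoint_setDU; rewrite disjoints_subset; apply/subsetP => x Hx.
    by rewrite !inE negb_and (XC_notin_XB Hx) orbT.
  - exact: oct_replace_by_XC.
  - by rewrite (leq_trans (leq_card_setU _ _)) // leq_add2l ltnW.
have sepSB : separates3 e XB XC fX (S :&: XB)
    (aux_agree S g) (aux_disagree S g) set0 (aux_deleted S).
  by split; [exact: separated_aux_of_col | move=> ? ? _; rewrite inE ..].
have [|Z [ZBs [Zsep _ _] Zmin]] := star (partition4_aux S g).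
  exists (S :&: XB); split; [exact: subsetIr | exact: leq_trans HC card_XC_le_aux_T | done].
have [h hP] := col_of_separator gS Zsep.
exists ((S :\: XB) :|: Z), h; split => //.
- apply: disjoint_setDU; rewrite disjoints_subset; apply/subsetP => x Hx.
  by rewrite !inE (subsetP ZBs x Hx).
- apply: leq_trans (leq_card_setU _ _) _; rewrite leq_add2l.
  by apply: Zmin sepSB; exact: subsetIr.
Qed.

End Replacement.

(** * Pulling back solutions of the reduced graph *)

(* The two copies of the gadget of parity [p]: {x} and {x'} if [p] is even,
   {x, y} and {x', y'} if [p] is odd; [gadget_half p i] says [i] lies in the
   first one. *)
Definition gadget_half (p : bool) (i : 'I_4) : bool := (i < (if p then 2 else 1))%N.

Section PullBack.
Variables (S' : {set redV V}) (g' : redV V -> bool).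
Hypothesis g'_col : proper2col_on (red_edge e XB XC Bs) (red_W e XB XC Bs :\: S') g'.

Definition Pset : {set V} := [set x | inl x \in S'].
Definition Rset : {set V * V * bool * 'I_4} := [set z | inr z \in S'].
Definition Qkeys : {set V * V * bool} :=
  [set z.1 | z in Rset & gadget_half z.1.2 z.2]
  :&: [set z.1 | z in Rset & ~~ gadget_half z.1.2 z.2].
Definition Qset : {set V} := [set k.1.1 | k in Qkeys].

Lemma card_Qkeys : 2 * #|Qkeys| <= #|Rset|.
Proof.
pose key (z : V * V * bool * 'I_4) := z.1.
rewrite -(cardsID [set z | gadget_half z.1.2 z.2] Rset) mul2n -addnn.
apply: leq_add; apply: leq_trans (leq_imset_card key _); apply: subset_leq_card;
  apply/subsetP => k /setIP [H1 H2]; [move: H1 | move: H2];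
  case/imsetP => z Hz ->; apply/imsetP; exists z => //; move: Hz;
  by rewrite !inE; case: (gadget_half _ _); rewrite ?andbT ?andbF.
Qed.

Lemma inl_of_card_le : #|S'| <= #|Pset :|: Qset| -> S' = inl @: Pset /\ Qset = set0.
Proof.
move=> S'_le.
have RQ : #|Rset| <= #|Qkeys|.
  rewrite -(leq_add2l #|Pset|) -card_sum_set (leq_trans S'_le) //.
  rewrite (leq_trans (leq_card_setU _ _)) // leq_add2l; exact: leq_imset_card.
have R0 : Rset = set0 by apply/eqP; rewrite -cards_eq0; have := card_Qkeys; lia.
have K0 : Qkeys = set0 by apply/eqP; rewrite -cards_eq0; have := card_Qkeys; lia.
split; last by rewrite /Qset K0 imset0.
apply/setP => -[x|z]; first by rewrite mem_imset ?inE //; exact: inl_inj.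
have : z \notin Rset by rewrite R0 inE.
by rewrite inE => /negbTE ->; apply/esym/imsetP => -[].
Qed.

Let W' := red_W e XB XC Bs :\: S'.

Lemma g'_red_base a b : a \in W' -> b \in W' -> red_base e a b -> g' a != g' b.
Proof.
move=> Ha Hb Hab; apply: g'_col => //.
by move: Ha Hb; rewrite /red_edge !in_setD => /andP [_ ->] /andP [_ ->]; rewrite Hab.
Qed.

Lemma odd_gadget_parity u v (i j : 'I_4) :
  inl u \in W' -> inl v \in W' -> inr (u, v, true, i) \in W' -> inr (u, v, true, j) \in W' ->
  ((i == 0 :> nat) && (j == 1 :> nat)) || ((i == 2 :> nat) && (j == 3 :> nat)) ->
  g' (inl u) != g' (inl v).
Proof.
move=> Hu Hv Hi Hj Hij.
have ui : g' (inr (u, v, true, i)) != g' (inl u).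
  apply: g'_red_base => //.
  by rewrite /= eqxx andbT; case/orP: Hij => /andP [-> _]; rewrite ?orbT.
have ij : g' (inr (u, v, true, i)) != g' (inr (u, v, true, j)).
  by apply: g'_red_base; rewrite //= eqxx Hij.
have jv : g' (inr (u, v, true, j)) != g' (inl v).
  apply: g'_red_base => //.
  by rewrite /= eqxx andbT; case/orP: Hij => /andP [_ ->]; rewrite ?orbT.
by move: ui ij jv; do 4!case: (g' _).
Qed.

Lemma even_gadget_parity u v (i : 'I_4) :
  inl u \in W' -> inl v \in W' -> inr (u, v, false, i) \in W' -> g' (inl u) = g' (inl v).
Proof.
move=> Hu Hv Hi.
have ui : g' (inr (u, v, false, i)) != g' (inl u) by apply: g'_red_base; rewrite //= eqxx.
have iv : g' (inr (u, v, false, i)) != g' (inl v).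
  by apply: g'_red_base; rewrite //= eqxx orbT.
by move: ui iv; do 3!case: (g' _).
Qed.

Lemma gadget_half_kept u v p : (u, v, p) \notin Qkeys ->
  exists b, forall i, gadget_half p i = b -> inr (u, v, p, i) \notin S'.
Proof.
rewrite in_setI negb_and => /orP [H|H]; [exists true | exists false];
  move=> i Hi; apply: contra H => Hin; apply/imsetP; exists (u, v, p, i) => //;
  by rewrite !inE Hin Hi.
Qed.

Lemma gadget_parity u v p :
  u \in XC :|: Bs -> v \in XC :|: Bs -> (enum_rank u <= enum_rank v)%N ->
  walk_through e (XB :\: Bs) u v p -> inl u \notin S' -> inl v \notin S' ->
  (u, v, p) \notin Qkeys -> p = g' (inl u) (+) g' (inl v).
Proof.
move=> Hu Hv Huv Hw HuS HvS /gadget_half_kept [b kept].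
have uW' : inl u \in W' by rewrite in_setD HuS inE notin_XB_setD.
have vW' : inl v \in W' by rewrite in_setD HvS inE notin_XB_setD.
have copyW' (i : 'I_4) : p || (i < 2)%N -> gadget_half p i = b -> inr (u, v, p, i) \in W'.
  by move=> Hi /kept HiS; rewrite in_setD HiS inE Hu Hv Huv Hi (asboolT Hw).
pose ord n (Hn : (n < 4)%N) : 'I_4 := Ordinal Hn.
case: p Hw copyW' {kept} => _ copyW'.
  have : g' (inl u) != g' (inl v).
    by case: b copyW' => copyW';
      [apply: (@odd_gadget_parity _ _ (ord 0 isT) (ord 1 isT)) |
       apply: (@odd_gadget_parity _ _ (ord 2 isT) (ord 3 isT))]; rewrite ?copyW'.
  by case: (g' (inl u)); case: (g' (inl v)).
have -> : g' (inl u) = g' (inl v).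
  by case: b copyW' => copyW';
    [apply: (@even_gadget_parity _ _ (ord 0 isT)) |
     apply: (@even_gadget_parity _ _ (ord 1 isT))]; rewrite ?copyW'.
by rewrite addbb.
Qed.

Lemma walk_parity_red u v p :
  u \in XC :|: Bs -> v \in XC :|: Bs -> u \notin Pset :|: Qset -> v \notin Pset :|: Qset ->
  walk_through e (XB :\: Bs) u v p -> p = g' (inl u) (+) g' (inl v).
Proof.
move=> Hu Hv; rewrite !inE !negb_or => /andP [HuP HuQ] /andP [HvP HvQ] Hw.
have notQ x y q : x \notin Qset -> (x, y, q) \notin Qkeys.
  by apply: contra => Hk; apply/imsetP; exists (x, y, q).
case: (leqP (enum_rank u) (enum_rank v)) => Huv; first by apply: gadget_parity => //; exact: notQ.
rewrite addbC; apply: (gadget_parity Hv Hu (ltnW Huv)) => //; last exact: notQ.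
exact: walk_through_sym.
Qed.

(* An anchor [a] of [w] forces the colour [g' (inl a) (+) q] on [w]. *)
Definition anchored (a w : V) (q : bool) : Prop :=
  [/\ a \in XC :|: Bs, a \notin Pset :|: Qset, w \in XB :\: Bs &
      exists t, [/\ all (mem (XB :\: Bs)) t, path e a (rcons t w) & odd (size t).+1 = q]].

Lemma anchored_consistent a b w q1 q2 : anchored a w q1 -> anchored b w q2 ->
  g' (inl a) (+) q1 = g' (inl b) (+) q2.
Proof.
move=> [Ha HaPQ Hw [t1 [Ht1 Hp1 Ho1]]] [Hb HbPQ _ [t2 [Ht2 Hp2 Ho2]]].
have : walk_through e (XB :\: Bs) a b (q1 (+) q2).
  exists (rcons t1 w ++ rev t2); split.
  - by case: t1 {Ht1 Hp1 Ho1}.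
  - by rewrite all_cat all_rcons all_rev Ht1 Ht2 !andbT; exact: Hw.
  - by rewrite rcons_cat cat_path last_rcons Hp1 rev_path_rcons.
  - by rewrite -Ho1 -Ho2 size_cat size_rcons size_rev -addnS oddD.
move/(walk_parity_red Ha Hb HaPQ HbPQ); clear Ho1 Ho2.
by case: (g' (inl a)); case: (g' (inl b)); case: q1; case: q2.
Qed.

Lemma anchored_step a x y q : anchored a x q -> e x y -> y \in XB :\: Bs ->
  anchored a y (~~ q).
Proof.
move=> [Ha HaPQ Hx [t [Ht Hp Ho]]] Hxy Hy; split => //.
exists (rcons t x); split.
- by rewrite all_rcons Ht andbT; exact: Hx.
- by rewrite rcons_path Hp last_rcons.
- by rewrite size_rcons -Ho.
Qed.

(* Components of G[XB \ B*] reached by no anchor only see deleted vertices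
   outside XB \ B*, so they may keep the colouring [fX]. *)
Definition pullback_col (w : V) : bool :=
  if w \in XB :\: Bs then
    if `[< exists a q, anchored a w q >] then
      `[< exists a q, anchored a w q /\ g' (inl a) (+) q = true >]
    else fX w
  else g' (inl w).

Lemma pullback_col_anchored a w q : anchored a w q -> pullback_col w = g' (inl a) (+) q.
Proof.
move=> Haw; have [_ _ Hw _] := Haw.
rewrite /pullback_col Hw asboolT; last by exists a, q.
case E : (g' (inl a) (+) q); first by apply: asboolT; exists a, q.
apply: asboolF => -[b [r [Hbw Er]]].
by rewrite (anchored_consistent Hbw Haw) E in Er.
Qed.

Lemma pullback_col_boundary x y : x \notin Pset :|: Qset -> e x y ->
  x \notin XB :\: Bs -> y \in XB :\: Bs -> pullback_col x != pullback_col y.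
Proof.
move=> HxPQ Hxy HxD HyD.
have HxCB : x \in XC :|: Bs.
  move: HxD HyD; rewrite !inE negb_and negbK => /orP [->|HxB /andP [_ HyB]];
    first by rewrite orbT.
  by rewrite e_sym in Hxy; rewrite (XB_edge_XC HyB HxB Hxy).
have Hxy_anch : anchored x y true by split => //; exists [::]; rewrite /= Hxy.
rewrite (pullback_col_anchored Hxy_anch) /pullback_col (negbTE HxD).
by case: (g' (inl x)).
Qed.

Lemma pullback_col_proper : proper2col_on e (~: (Pset :|: Qset)) pullback_col.
Proof.
move=> x y; rewrite !in_setC => HxPQ HyPQ Hxy.
case: (boolP (x \in XB :\: Bs)) => HxD; case: (boolP (y \in XB :\: Bs)) => HyD.
- case: (pselect (exists a q, anchored a x q)) => [[a [q Hax]]|no_anch].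
    rewrite (pullback_col_anchored Hax) (pullback_col_anchored (anchored_step Hax Hxy HyD)).
    by rewrite addbN; case: (_ (+) _).
  have no_anch' : ~ (exists a q, anchored a y q).
    move=> [a [q Hay]]; apply: no_anch; exists a, (~~ q).
    by apply: anchored_step Hay _ HxD; rewrite e_sym.
  rewrite /pullback_col HxD HyD (asboolF no_anch) (asboolF no_anch').
  by move: HxD HyD; rewrite !inE => /andP [_ HxB] /andP [_ HyB]; apply: fX_col.
- by rewrite eq_sym; apply: pullback_col_boundary => //; rewrite e_sym.
- exact: pullback_col_boundary.
- rewrite /pullback_col (negbTE HxD) (negbTE HyD).
  move: HxPQ HyPQ; rewrite !inE !negb_or => /andP [HxP _] /andP [HyP _].
  apply: g'_col.
  + by rewrite in_setD HxP inE HxD.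
  + by rewrite in_setD HyP inE HyD.
  + by rewrite /red_edge [inl x \in _]inE [inl y \in _]inE HxD HyD /= Hxy.
Qed.

Lemma disjoint_PQset : S' \subset red_W e XB XC Bs -> [disjoint Pset :|: Qset & XB :\: Bs].
Proof.
move=> S'W; rewrite disjoints_subset subUset; apply/andP; split; apply/subsetP => x.
  by rewrite in_setC /Pset inE => /(subsetP S'W); rewrite inE.
rewrite /Qset /Qkeys => /imsetP [_ /setIP [/imsetP [z Hz ->] _] ->].
case/setIdP: Hz; rewrite /Rset inE => /(subsetP S'W).
case: z => [[[u v] p] i]; rewrite inE => /and5P [Hu _ _ _ _] _.
by rewrite in_setC; exact: notin_XB_setD.
Qed.

End PullBack.
End OddCycleCut.

Theorem lemma5p3 (V : finType) (e : rel V) (XB XC XR Bs : {set V})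
    (fX : V -> bool) (S' : {set redV V}) :
  simple_graph e ->
  is_OCC e XB XC XR ->
  proper2col_on e XB fX ->
  Bs \subset XB ->
  property_star e XB XC fX Bs ->
  is_min_oct (red_edge e XB XC Bs) (red_W e XB XC Bs) S' ->
  S' \subset (@inl V (V * V * bool * 'I_4)) @: [set: V] :&: red_W e XB XC Bs /\
  is_min_oct e [set: V] [set x : V | inl x \in S'].
Proof.
move=> [e_sym _] occ fX_col _ star [[S'W [g' g'_col]] S'_min].
have PQ_col := pullback_col_proper e_sym occ fX_col g'_col.
have PQ_disj := disjoint_PQset occ S'W.
have := S'_min _ (red_oct_of_oct XC PQ_disj PQ_col).
rewrite (card_imset _ inl_inj) => /inl_of_card_le [S'E Q0].
split.
  apply/subsetP => z Hz; rewrite inE (subsetP S'W _ Hz) andbT.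
  by move: Hz; rewrite S'E => /imsetP [x _ ->]; apply: imset_f.
split.
  by apply/is_oct_setTP; exists (pullback_col e XB XC Bs fX S' g'); rewrite Q0 setU0 in PQ_col.
move=> S2 /(avoiding_oct_of_oct e_sym occ fX_col star) [S3 [h [S3_disj h_col S3_le]]].
apply: leq_trans S3_le; move: (S'_min _ (red_oct_of_oct XC S3_disj h_col)).
by rewrite {1}S'E !(card_imset _ inl_inj).
Qed.
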